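(* Let $\mathbf{F}=(F_1,\ldots,F_d)$ be a vector of finite simple graphs, each with at most $n$ vertices, and let $e_i$ be the number of edges of $F_i$. Then the spine $\{ (p^{e_1}, p^{e_2}, \ldots, p^{e_d} ) \mid 0\leq p \leq 1 \}$ is contained in $P_{\mathbf{F};n}$ (with the convention $0^0=1$).
   Context: For graphs $F,G$, $t^L(F,G)$ is the number of subgraphs of $G$ (not necessarily induced) isomorphic to $F$, and $t(F,G)=t^L(F,G)/t^L(F,K_{|G|})$ if $|F|\le|G|$ and $t(F,G)=0$ otherwise, where $|H|$ is the number of vertices of $H$ and $K_N$ the complete graph on $N$ vertices. Write $t(\mathbf{F},G)=(t(F_1,G),\ldots,t(F_d,G))$. The polytope from subgraph statistics is $P_{\mathbf{F};n}=\mathrm{conv}\{t(\mathbf{F},G)\mid G \text{ a graph on } n \text{ vertices}\}\subseteq\mathbb{R}^d$. *)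

From HB Require Import structures.
From mathcomp Require Import all_boot all_order all_algebra.
Set Implicit Arguments.
Unset Strict Implicit.
Unset Printing Implicit Defensive.
Import Order.TTheory GRing.Theory Num.Theory.
Local Open Scope ring_scope.

Record sgraph := SGraph {
  nv : nat;
  edges : {set {set 'I_nv}};
  edgesP : forall e, e \in edges -> #|e| = 2%N }.

Definition ne (F : sgraph) : nat := #|edges F|.

Definition Kedges (N : nat) : {set {set 'I_N}} := [set e : {set 'I_N} | #|e| == 2%N].

Definition iso_copy (F : sgraph) (N : nat)
    (V' : {set 'I_N}) (E' : {set {set 'I_N}}) : bool :=
  [exists f : {ffun 'I_(nv F) -> 'I_N},
     [&& injectiveb f, f @: setT == V' & [set (f @: e) | e : {set 'I_(nv F)} in edges F] == E']].

(* t^L(F,G) for a graph G on 'I_N with edge set EG: the number of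
   (not necessarily induced) subgraphs (V',E') of G isomorphic to F. *)
Definition tL (F : sgraph) (N : nat) (EG : {set {set 'I_N}}) : nat :=
  #|[set p : {set 'I_N} * {set {set 'I_N}} |
       (p.2 \subset EG) && iso_copy F p.1 p.2]|.

Definition tdens (R : realFieldType) (F : sgraph) (G : sgraph) : R :=
  if (nv F <= nv G)%N
  then (tL F (edges G))%:R / (tL F (Kedges (nv G)))%:R
  else 0.

Definition tvec (R : realFieldType) (d : nat) (F : 'I_d -> sgraph) (G : sgraph)
  : 'rV[R]_d := \row_i tdens R (F i) G.

Definition in_conv (R : realFieldType) (d : nat) (P : 'rV[R]_d -> Prop)
    (x : 'rV[R]_d) : Prop :=
  exists (m : nat) (w : 'I_m -> R) (y : 'I_m -> 'rV[R]_d),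
    [/\ forall j, 0 <= w j, \sum_j w j = 1, forall j, P (y j)
      & x = \sum_j w j *: y j].

Definition in_polytope (R : realFieldType) (d : nat) (F : 'I_d -> sgraph)
    (n : nat) (x : 'rV[R]_d) : Prop :=
  in_conv (fun y => exists G : sgraph, nv G = n /\ y = tvec R F G) x.

(** The point (p^e_1, ..., p^e_d) is the expected subgraph-density vector of
    the Erdős–Rényi random graph G(n, p): every copy of F_i in K_n survives
    with probability p^e_i, so by linearity E[t^L(F_i, G)] = p^e_i t^L(F_i, K_n).
    An expectation over the finitely many graphs on n vertices is a convex
    combination of their density vectors. *)
From HB Require Import structures.
From mathcomp Require Import all_boot all_order all_algebra.
Set Implicit Arguments.
Unset Strict Implicit.
Unset Printing Implicit Defensive.

Import Order.TTheory GRing.Theory Num.Theory.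
Local Open Scope ring_scope.

Lemma in_conv_finsum (R : realFieldType) (d : nat) (P : 'rV[R]_d -> Prop)
    (T : finType) (w : T -> R) (y : T -> 'rV[R]_d) :
  (forall t, 0 <= w t) -> \sum_t w t = 1 -> (forall t, P (y t)) ->
  in_conv P (\sum_t w t *: y t).
Proof.
move=> w_ge0 w_sum1 Py.
exists #|[set: T]|, (fun j => w (enum_val j)), (fun j => y (enum_val j)).
split => //.
- rewrite -(big_enum_val (A := mem [set: T]) w) /= -w_sum1.
  by apply: eq_bigl => t; rewrite inE.
- rewrite -(big_enum_val (A := mem [set: T]) (fun t => w t *: y t)) /=.
  by apply: eq_bigl => t; rewrite inE.
Qed.

(* Under the product measure on {ffun T -> bool} with factors q t, the event
   "every t in E is selected" has probability prod_(t in E) q t true. *)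
Lemma sum_prod_bool_subset (R : comNzRingType) (T : finType)
    (q : T -> bool -> R) (E : {set T}) :
  (forall t, t \notin E -> q t true + q t false = 1) ->
  \sum_(g : {ffun T -> bool}) (\prod_t q t (g t)) * (E \subset [set t | g t])%:R
    = \prod_(t in E) q t true.
Proof.
move=> q_sum1.
have subset_prod (g : {ffun T -> bool}) : (E \subset [set t | g t])%:R =
    \prod_t (if t \in E then (g t)%:R else 1) :> R.
  case: (boolP (E \subset _)) => [/subsetP sub | /subsetPn[t tE]].
    by rewrite big1 // => t _; case: ifP => // /sub; rewrite inE => ->.
  by rewrite inE (bigD1 t) //= tE => /negbTE ->; rewrite mul0r.
under [LHS]eq_bigr do rewrite subset_prod -big_split /=.
rewrite -(bigA_distr_bigA (fun t b => q t b * (if t \in E then b%:R else 1))).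
rewrite [RHS]big_mkcond /=; apply: eq_bigr => t _; rewrite big_bool /=.
case: (boolP (t \in E)) => tE; first by rewrite mulr1 mulr0 addr0.
by rewrite !mulr1 q_sum1.
Qed.

Lemma iso_copy_edges (F : sgraph) (N : nat) V E : iso_copy F V E ->
  E \subset Kedges N /\ #|E| = ne F.
Proof.
move=> /existsP[f /and3P[/injectiveP f_inj _ /eqP <-]].
rewrite card_imset; last exact: imset_inj.
split=> //; apply/subsetP => _ /imsetP[e eF ->].
by rewrite inE card_imset // (edgesP eF).
Qed.

Lemma tL_Kedges_gt0 (F : sgraph) (N : nat) : (nv F <= N)%N ->
  (0 < tL F (Kedges N))%N.
Proof.
move=> le_FN; rewrite card_gt0; apply/set0Pn.
pose f := [ffun i => widen_ord le_FN i].
pose E := [set f @: e | e : {set 'I_(nv F)} in edges F].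
have copy : iso_copy F (f @: setT) E.
  apply/existsP; exists f; rewrite !eqxx !andbT; apply/injectiveP => i j.
  by rewrite !ffunE => /(congr1 val) /= eq_ij; apply: val_inj.
exists (f @: setT, E); rewrite inE copy andbT.
by case: (iso_copy_edges copy).
Qed.

Lemma tL_sum_copies (R : nzSemiRingType) (F : sgraph) (N : nat)
    (EG : {set {set 'I_N}}) :
  (tL F EG)%:R = \sum_(c | iso_copy F c.1 c.2) (c.2 \subset EG)%:R :> R.
Proof.
rewrite /tL -sum1_card natr_sum [LHS]big_mkcond [RHS]big_mkcond /=.
apply: eq_bigr => c _; rewrite inE andbC.
by case: (iso_copy F c.1 c.2); case: (c.2 \subset EG).
Qed.

Section RandomGraph.
Variables (R : realFieldType) (n : nat) (p : R).
Hypotheses (p_ge0 : 0 <= p) (p_le1 : p <= 1).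

Definition sampled_edges (g : {ffun {set 'I_n} -> bool}) : {set {set 'I_n}} :=
  [set e in Kedges n | g e].

Lemma sampled_edgesP g e : e \in sampled_edges g -> #|e| = 2%N.
Proof. by rewrite !inE => /andP[/eqP]. Qed.

Definition sampled_graph g := SGraph (@sampled_edgesP g).

(* Non-pairs [e] are sampled with probability 0; they are ignored by
   [sampled_edges] anyway. *)
Definition edge_prob (e : {set 'I_n}) (b : bool) : R :=
  if #|e| == 2%N then (if b then p else 1 - p) else (if b then 0 else 1).

Definition gnp_weight (g : {ffun {set 'I_n} -> bool}) : R :=
  \prod_e edge_prob e (g e).

Lemma gnp_weight_ge0 g : 0 <= gnp_weight g.
Proof.
apply: prodr_ge0 => e _; rewrite /edge_prob.
by case: ifP; case: (g e); rewrite ?subr_ge0 ?ler01.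
Qed.

Lemma edge_prob_sum1 e : edge_prob e true + edge_prob e false = 1.
Proof. by rewrite /edge_prob; case: ifP; rewrite ?add0r // addrC subrK. Qed.

Lemma sum_gnp_weight_subset (E : {set {set 'I_n}}) : E \subset Kedges n ->
  \sum_g gnp_weight g * (E \subset sampled_edges g)%:R = p ^+ #|E|.
Proof.
move=> EK.
under eq_bigr do rewrite /sampled_edges setIdE subsetI EK.
rewrite sum_prod_bool_subset; last by move=> e _; apply: edge_prob_sum1.
rewrite -prodr_const.
by apply: eq_bigr => e eE; move: (subsetP EK e eE); rewrite inE /edge_prob => ->.
Qed.

Lemma sum_gnp_weight : \sum_g gnp_weight g = 1.
Proof.
rewrite -(expr0 p) -(cards0 {set 'I_n}) -(sum_gnp_weight_subset (sub0set _)).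
by apply: eq_bigr => g _; rewrite sub0set mulr1.
Qed.

Lemma sum_gnp_tL (F : sgraph) :
  \sum_g gnp_weight g * (tL F (sampled_edges g))%:R
    = (tL F (Kedges n))%:R * p ^+ ne F.
Proof.
under eq_bigr do rewrite tL_sum_copies mulr_sumr.
rewrite exchange_big tL_sum_copies mulr_suml /=.
apply: eq_bigr => c copy; have [cK <-] := iso_copy_edges copy.
by rewrite cK mul1r sum_gnp_weight_subset.
Qed.

Lemma sum_gnp_tdens (F : sgraph) : (nv F <= n)%N ->
  \sum_g gnp_weight g * tdens R F (sampled_graph g) = p ^+ ne F.
Proof.
move=> le_Fn; rewrite /tdens /= le_Fn.
have tLK_neq0 : (tL F (Kedges n))%:R != 0 :> R.
  by rewrite pnatr_eq0 -lt0n tL_Kedges_gt0.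
under eq_bigr do rewrite mulrA.
by rewrite -mulr_suml sum_gnp_tL mulrC mulKf.
Qed.

End RandomGraph.

Theorem proposition3p1 (R : realFieldType) (d n : nat) (F : 'I_d -> sgraph)
  (hF : forall i, (nv (F i) <= n)%N) (p : R) (hp0 : 0 <= p) (hp1 : p <= 1) :
  in_polytope F n (\row_i p ^+ ne (F i)).
Proof.
have -> : \row_i p ^+ ne (F i) =
    \sum_(g : {ffun {set 'I_n} -> bool})
      gnp_weight p g *: tvec R F (sampled_graph g).
  apply/rowP => i; rewrite !mxE summxE.
  under eq_bigr do rewrite !mxE.
  by rewrite (sum_gnp_tdens p (hF i)).
apply: in_conv_finsum.
- by move=> g; apply: gnp_weight_ge0.
- exact: sum_gnp_weight.
- by move=> g; exists (sampled_graph g).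
Qed.
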